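(* Let $p$ be a prime and $e_1\ge e_2$ positive integers with $e=e_1+e_2$ and $p\nmid(e-1)(e_1-1)(e_2-1)$. Let $pw$ be the smallest multiple of $p$ that is $\ge e_1$. Suppose $\lfloor\frac{e-1}{p}\rfloor>\lfloor\frac{e_1-1}{p}\rfloor+\lfloor\frac{e_2-1}{p}\rfloor$. Then $p\nmid\binom{e_2-1}{pw-e_1}$, $p\nmid\binom{e_2-1}{pw-e_1+1}$, and $p\nmid Z$, where $Z=\sum_{k=0}^{pw-e_1}\binom{e_2-1}{k}(-1)^{e_2-1-k}$. *)

From mathcomp Require Import all_boot all_algebra.
Set Implicit Arguments. Unset Strict Implicit. Unset Printing Implicit Defensive.
Import GRing.Theory Num.Theory.

Definition least_mult_ge (p e1 : nat) : nat := p * ((e1 + p.-1) %/ p).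

Definition Zsum (e2 m : nat) : int :=
  (\sum_(0 <= k < m.+1) (-1) ^+ (e2.-1 - k) * ('C(e2.-1, k))%:Z)%R.

From mathcomp Require Import all_boot all_algebra.
From mathcomp Require Import zify ring.
Set Implicit Arguments. Unset Strict Implicit. Unset Printing Implicit Defensive.
Import GRing.Theory.

(* Write e1 - 1 = A p + r and e2 - 1 = B p + s with 0 < r, s < p.  The
   hypothesis on the quotients says that adding e1 - 1 and e2 - 1 in base p
   carries out of the last digit, and as p does not divide e - 1 this means
   r + s >= p.  Hence pw - e1 = p - 1 - r < s, so the binomial coefficients
   C(e2 - 1, pw - e1), C(e2 - 1, pw - e1 + 1) and C(e2 - 2, pw - e1) all have a
   bottom entry at most the last base-p digit of the top entry, and such
   coefficients are prime to p: the falling factorial n (n-1) ... (n-k+1)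
   then has no factor divisible by p.  Finally Z telescopes by Pascal's rule
   to +-C(e2 - 2, pw - e1). *)

Lemma leq_modnD_carry (p a b : nat) : 0 < p -> ~~ (p %| a + b + 1) ->
  a %/ p + b %/ p < (a + b + 1) %/ p -> p <= a %% p + b %% p.
Proof.
move=> p_gt0 ndvd carry.
have split_ab : a + b + 1 = (a %/ p + b %/ p) * p + (a %% p + b %% p).+1.
  by rewrite {1}(divn_eq a p) {1}(divn_eq b p); lia.
rewrite split_ab divnMDl // -[ltnLHS]addn0 ltn_add2l divn_gt0 // in carry.
rewrite split_ab dvdn_addr ?dvdn_mull // in ndvd.
rewrite -ltnS ltn_neqAle carry andbT.
by apply: contraNneq ndvd => <-.
Qed.

Lemma least_mult_ge_subn (p n : nat) : 0 < p -> 0 < n ->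
  least_mult_ge p n - n = p.-1 - (n - 1) %% p.
Proof.
move=> p_gt0 n_gt0; rewrite /least_mult_ge.
have lt_mod : (n - 1) %% p < p by rewrite ltn_mod.
have split_n : n = (n - 1) %/ p * p + (n - 1) %% p + 1 by rewrite -divn_eq; lia.
move: lt_mod split_n; set q := (n - 1) %/ p; set r := (n - 1) %% p => lt_r_p split_n.
have -> : n + p.-1 = q.+1 * p + r by rewrite {1}split_n; lia.
rewrite divnMDl // (divn_small lt_r_p) addn0 mulnC; lia.
Qed.

Lemma prime_ndvd_bin (p n k : nat) : prime p -> k <= n %% p -> ~~ (p %| 'C(n, k)).
Proof.
move=> p_pr le_k_mod; have p_gt0 := prime_gt0 p_pr.
apply/negP => /(dvdn_mulr k`!); rewrite bin_ffact ffact_prod Euclid_dvd_prod //.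
rewrite big1_idem // => i _; apply/negbTE.
have lt_i_mod : i < n %% p := leq_trans (ltn_ord i) le_k_mod.
rewrite {1}(divn_eq n p) -addnBA 1?ltnW // dvdn_addr ?dvdn_mull //.
by rewrite gtnNdvd ?subn_gt0 // (leq_ltn_trans (leq_subr _ _)) ?ltn_mod.
Qed.

Lemma sum_signed_bin (R : comPzRingType) (b m : nat) : m < b ->
  (\sum_(0 <= k < m.+1) (-1) ^+ (b - k) * 'C(b, k)%:R =
   (-1) ^+ (b - m) * 'C(b.-1, m)%:R :> R)%R.
Proof.
elim: m => [|m IHm] lt_m_b; first by rewrite big_nat1 !bin0.
case: b lt_m_b IHm => // b lt_m_b IHm.
rewrite big_nat_recr //= IHm ?(ltn_trans _ lt_m_b) //= binS natrD.
have -> : b.+1 - m = (b - m).+1 by rewrite subSn // ltnW.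
by rewrite subSS exprS; ring.
Qed.

Lemma Zsum_bin (e2 m : nat) : m < e2.-1 ->
  Zsum e2 m = ((-1) ^+ (e2.-1 - m) * ('C(e2.-2, m))%:Z)%R.
Proof.
move=> lt_m; rewrite /Zsum -natz -(@sum_signed_bin int _ _ lt_m).
by apply: eq_bigr => k _; rewrite natz.
Qed.

Theorem lemma5p4 (p e1 e2 : nat) :
  prime p -> 0 < e2 -> e2 <= e1 ->
  let e := e1 + e2 in
  ~~ (p %| (e - 1) * (e1 - 1) * (e2 - 1)) ->
  (e - 1) %/ p > (e1 - 1) %/ p + (e2 - 1) %/ p ->
  let pw := least_mult_ge p e1 in
  [/\ ~~ (p %| 'C(e2 - 1, pw - e1)),
      ~~ (p %| 'C(e2 - 1, pw - e1 + 1)) &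
      ~~ (p%:Z %| Zsum e2 (pw - e1))%Z].
Proof.
move=> p_pr e2_gt0 le_e2_e1 e ndvd carry pw.
have p_gt0 := prime_gt0 p_pr.
rewrite !Euclid_dvdM // -orbA !negb_or in ndvd; case/and3P: ndvd => ndvd_e ndvd_e1 ndvd_e2.
have e_sub1 : e - 1 = (e1 - 1) + (e2 - 1) + 1 by rewrite /e; lia.
rewrite e_sub1 in ndvd_e carry.
have le_p_mods := leq_modnD_carry p_gt0 ndvd_e carry.
have s_gt0 : 0 < (e2 - 1) %% p by rewrite lt0n.
have le_s_e2 := leq_mod (e2 - 1) p.
rewrite /pw (least_mult_ge_subn p_gt0 (leq_trans e2_gt0 le_e2_e1)); split.
- by apply: prime_ndvd_bin => //; lia.
- by apply: prime_ndvd_bin => //; lia.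
rewrite Zsum_bin; last lia.
rewrite dvdzE abszMsign /=; apply: prime_ndvd_bin => //.
have -> : e2.-2 = (e2 - 1).-1 by lia.
have p_gt1 := prime_gt1 p_pr.
rewrite modn_pred ?(negbTE ndvd_e2); lia.
Qed.
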